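(* Suppose the total preorder $\succeq$ on $\mathcal{Q}_b$ is continuous (with respect to uniform convergence), monotonic, and satisfies the dual independence axiom. Then there exists a nonnegative, bounded, finitely additive measure $\mu$ on $\Sigma$ such that the functional $$U(\Phi)=\int_0^1\Phi(p)\,\mu(dp),\qquad \Phi\in B((0,1],\Sigma),$$ (integral with respect to a finitely additive measure) restricted to $\mathcal{Q}_b$ is a numerical representation of $\succeq$.
   Context: $\mathcal{Q}_b$ is the set of bounded, nondecreasing, left-continuous functions on $(0,1]$. $\Sigma$ is the algebra of subsets of $(0,1]$ generated by finite unions and intersections of intervals $(a,b]$, $0<a<b\le1$. $B((0,1],\Sigma)$ is the Banach space (sup norm) of uniform limits of $\Sigma$-simple functions $\sum\alpha_i\mathbf{1}_{A_i}$. Integration of functions in $B((0,1],\Sigma)$ against a bounded finitely additive measure is in the sense of Dunford–Schwartz. A total preorder is reflexive, transitive, complete; $\succ$ its strict part; continuity means closed upper and lower contour sets. Monotonic: $\Phi\ge\Psi$ pointwise implies $\Phi\succeq\Psi$. Dual independence axiom: $\Phi\succ\Psi$ implies $\alpha\Phi+(1-\alpha)\Upsilon\succ\alpha\Psi+(1-\alpha)\Upsilon$ for all $\Upsilon\in\mathcal{Q}_b$, $\alpha\in(0,1)$. Numerical representation: $\Phi\succ\Psi\iff U(\Phi)>U(\Psi)$. *)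

From Stdlib Require Import Reals List ClassicalEpsilon.
Open Scope R_scope.

(* Functions on (0,1] are represented as R -> R; only values on (0,1] matter. *)
Definition unit_int (x : R) : Prop := 0 < x <= 1.

Definition in_Qb (Phi : R -> R) : Prop :=
  (exists M, forall x, unit_int x -> Rabs (Phi x) <= M) /\
  (forall x y, unit_int x -> unit_int y -> x <= y -> Phi x <= Phi y) /\
  (forall p, unit_int p -> forall eps, eps > 0 ->
     exists delta, delta > 0 /\
       forall q, 0 < q -> p - delta < q -> q <= p -> Rabs (Phi q - Phi p) < eps).

(* The algebra Sigma of subsets of (0,1] generated by the intervals (a,b],
   0 < a < b <= 1 (an algebra on (0,1]: contains (0,1], closed under
   relative complement and finite unions; sets are predicates, taken up to
   extensional equality). *)
Inductive Sigma : (R -> Prop) -> Prop :=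
| Sigma_int : forall a b, 0 < a -> a < b -> b <= 1 -> Sigma (fun x => a < x <= b)
| Sigma_full : Sigma unit_int
| Sigma_compl : forall A, Sigma A -> Sigma (fun x => unit_int x /\ ~ A x)
| Sigma_union : forall A B, Sigma A -> Sigma B -> Sigma (fun x => A x \/ B x)
| Sigma_inter : forall A B, Sigma A -> Sigma B -> Sigma (fun x => A x /\ B x)
| Sigma_ext : forall A B, Sigma A -> (forall x, A x <-> B x) -> Sigma B.

Definition fa_measure (mu : (R -> Prop) -> R) : Prop :=
  (forall A B, Sigma A -> Sigma B -> (forall x, ~ (A x /\ B x)) ->
     mu (fun x => A x \/ B x) = mu A + mu B).

Definition nonneg_measure (mu : (R -> Prop) -> R) : Prop :=
  forall A, Sigma A -> 0 <= mu A.

Definition bounded_measure (mu : (R -> Prop) -> R) : Prop :=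
  exists M, forall A, Sigma A -> Rabs (mu A) <= M.

Definition indic (A : R -> Prop) (x : R) : R :=
  if excluded_middle_informative (A x) then 1 else 0.

(* Sigma-simple functions sum_i alpha_i 1_{A_i}, given as lists of (alpha_i, A_i). *)
Definition simple_ok (s : list (R * (R -> Prop))) : Prop :=
  forall c, In c s -> Sigma (snd c).

Definition simple_val (s : list (R * (R -> Prop))) (x : R) : R :=
  fold_right (fun c acc => fst c * indic (snd c) x + acc) 0 s.

Definition simple_int (mu : (R -> Prop) -> R) (s : list (R * (R -> Prop))) : R :=
  fold_right (fun c acc => fst c * mu (snd c) + acc) 0 s.

Definition in_B_Sigma (Phi : R -> R) : Prop :=
  forall delta, delta > 0 ->
    exists s, simple_ok s /\ forall x, unit_int x -> Rabs (Phi x - simple_val s x) < delta.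

Definition DS_integral (mu : (R -> Prop) -> R) (Phi : R -> R) (I : R) : Prop :=
  in_B_Sigma Phi /\
  forall eps, eps > 0 -> exists delta, delta > 0 /\
    forall s, simple_ok s ->
      (forall x, unit_int x -> Rabs (Phi x - simple_val s x) < delta) ->
      Rabs (simple_int mu s - I) < eps.

Definition total_preorder (pref : (R -> R) -> (R -> R) -> Prop) : Prop :=
  (forall F, in_Qb F -> pref F F) /\
  (forall F G H, in_Qb F -> in_Qb G -> in_Qb H -> pref F G -> pref G H -> pref F H) /\
  (forall F G, in_Qb F -> in_Qb G -> pref F G \/ pref G F).

Definition strict (pref : (R -> R) -> (R -> R) -> Prop) (F G : R -> R) : Prop :=
  pref F G /\ ~ pref G F.

Definition unif_conv (Fn : nat -> R -> R) (F : R -> R) : Prop :=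
  forall eps, eps > 0 -> exists N, forall n, (n >= N)%nat ->
    forall x, unit_int x -> Rabs (Fn n x - F x) < eps.

Definition pref_continuous (pref : (R -> R) -> (R -> R) -> Prop) : Prop :=
  forall G Fn F, in_Qb G -> (forall n, in_Qb (Fn n)) -> in_Qb F -> unif_conv Fn F ->
    ((forall n, pref (Fn n) G) -> pref F G) /\
    ((forall n, pref G (Fn n)) -> pref G F).

Definition pref_monotonic (pref : (R -> R) -> (R -> R) -> Prop) : Prop :=
  forall F G, in_Qb F -> in_Qb G -> (forall p, unit_int p -> F p >= G p) -> pref F G.

Definition dual_independence (pref : (R -> R) -> (R -> R) -> Prop) : Prop :=
  forall F G H alpha, in_Qb F -> in_Qb G -> in_Qb H -> 0 < alpha < 1 ->
    strict pref F G ->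
    strict pref (fun p => alpha * F p + (1 - alpha) * H p)
                (fun p => alpha * G p + (1 - alpha) * H p).

(* If all constants are indifferent, monotonicity makes the whole
   preference trivial and the zero measure represents it.  Otherwise dual
   independence (mixing with constants, then halving) shows that constants are
   ranked by their value.  Then every F in Q_b has a certainty equivalent
   ce(F): the supremum of the constants F weakly dominates, which is
   indifferent to F by continuity, and ce represents the preference.  Dual
   independence together with continuity makes ce affine under mixtures, hence
   additive and positively homogeneous, so ce extends to a monotone linear
   functional L on the space D = Q_b - Q_b, nonexpansive for the sup norm.
   Indicators of sets of Sigma lie in D, so mu(A) = L(1_A) is a nonnegative
   finitely additive measure with mu <= 1, and L agrees with the elementary
   integral on simple functions.  Nonexpansiveness extends this integral to
   all uniform limits of simple functions (Dunford--Schwartz), and on Q_b it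
   coincides with ce, which gives the representation. *)

From Stdlib Require Import Reals Lra Lia Classical ClassicalEpsilon.
Open Scope R_scope.

Lemma abs_lt x a : Rabs x < a <-> - a < x < a.
Proof. unfold Rabs; destruct Rcase_abs; split; intros; lra. Qed.

Lemma abs_le x a : Rabs x <= a <-> - a <= x <= a.
Proof. unfold Rabs; destruct Rcase_abs; split; intros; lra. Qed.

Lemma abs_bounds x : - Rabs x <= x <= Rabs x.
Proof. apply abs_le; lra. Qed.

Definition en (n : nat) : R := / INR (S n).

Lemma en_pos n : 0 < en n.
Proof. apply Rinv_0_lt_compat, lt_0_INR; lia. Qed.

Lemma unif_conv_en (Fn : nat -> R -> R) F :
  (forall n x, unit_int x -> Rabs (Fn n x - F x) <= en n) -> unif_conv Fn F.
Proof.
  intros Hclose eps Heps.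
  destruct (archimed_cor1 eps Heps) as [N [HN HN0]].
  exists N; intros n Hn x Hx.
  apply Rle_lt_trans with (en n); [exact (Hclose n x Hx)|].
  apply Rle_lt_trans with (/ INR N); [|exact HN].
  apply Rinv_le_contravar; [apply lt_0_INR; lia|].
  rewrite S_INR; apply le_INR in Hn; lra.
Qed.

Definition cst (k : R) : R -> R := fun _ => k.

Definition step (t : R) : R -> R := fun x => if Rlt_dec t x then 1 else 0.

Definition mix (al : R) (F H : R -> R) : R -> R := fun p => al * F p + (1 - al) * H p.

Lemma Qb_cst k : in_Qb (cst k).
Proof.
  unfold cst; split; [|split].
  - exists (Rabs k); intros; lra.
  - intros; lra.
  - intros p _ eps He; exists 1; split; [lra|]; intros; apply abs_lt; lra.
Qed.

Lemma Qb_step t : in_Qb (step t).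
Proof.
  unfold step; split; [|split].
  - exists 1; intros; destruct Rlt_dec; apply abs_le; lra.
  - intros x y _ _ Hxy; do 2 destruct Rlt_dec; lra.
  - intros p Hp eps He; destruct (Rlt_dec t p).
    + exists (p - t); split; [lra|]; intros q _ Hq _.
      destruct Rlt_dec; [|lra]; apply abs_lt; lra.
    + exists 1; split; [lra|]; intros q _ _ Hq.
      destruct Rlt_dec; [lra|]; apply abs_lt; lra.
Qed.

Lemma Qb_lift2 (h : R -> R -> R) (L : R) F G : 0 <= L ->
  (forall u u' v v', u <= u' -> v <= v' -> h u v <= h u' v') ->
  (forall u u' v v', Rabs (h u v - h u' v') <= L * (Rabs (u - u') + Rabs (v - v'))) ->
  in_Qb F -> in_Qb G -> in_Qb (fun x => h (F x) (G x)).
Proof.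
  intros HL Hmono Hlip [[MF HMF] [HmF HlF]] [[MG HMG] [HmG HlG]]; split; [|split].
  - exists (Rabs (h 0 0) + L * (MF + MG)); intros x Hx.
    assert (Hd := Hlip (F x) 0 (G x) 0).
    rewrite !Rminus_0_r in Hd.
    assert (Rabs (F x) + Rabs (G x) <= MF + MG) by (pose proof (HMF x Hx); pose proof (HMG x Hx); lra).
    assert (L * (Rabs (F x) + Rabs (G x)) <= L * (MF + MG)) by (apply Rmult_le_compat_l; lra).
    pose proof (Rabs_triang_inv (h (F x) (G x)) (h 0 0)); lra.
  - intros x y Hx Hy Hxy; apply Hmono; auto.
  - intros p Hp eps He.
    set (e := eps / (2 * (L + 1))).
    assert (He' : 0 < e) by (unfold e; apply Rdiv_lt_0_compat; lra).
    assert (Hee : 2 * (L + 1) * e = eps) by (unfold e; field; lra).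
    destruct (HlF p Hp e He') as [dF [HdF HF]].
    destruct (HlG p Hp e He') as [dG [HdG HG]].
    exists (Rmin dF dG); split; [apply Rmin_pos; lra|].
    intros q Hq0 Hq1 Hq2.
    assert (AF := HF q Hq0 ltac:(pose proof (Rmin_l dF dG); lra) Hq2).
    assert (AG := HG q Hq0 ltac:(pose proof (Rmin_r dF dG); lra) Hq2).
    apply Rle_lt_trans with (L * (Rabs (F q - F p) + Rabs (G q - G p))); [apply Hlip|].
    assert (L * (Rabs (F q - F p) + Rabs (G q - G p)) <= L * (2 * e))
      by (apply Rmult_le_compat_l; lra).
    nra.
Qed.

Lemma Qb_plus F G : in_Qb F -> in_Qb G -> in_Qb (fun p => F p + G p).
Proof.
  apply (Qb_lift2 Rplus 1); [lra | intros; lra |].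
  intros u u' v v'; pose proof (abs_bounds (u - u')); pose proof (abs_bounds (v - v')).
  apply abs_le; lra.
Qed.

Lemma Qb_scal a F : 0 <= a -> in_Qb F -> in_Qb (fun p => a * F p).
Proof.
  intros Ha HF; apply (Qb_lift2 (fun u _ => a * u) a F F); auto.
  - intros; apply Rmult_le_compat_l; auto.
  - intros u u' v v'; rewrite <- Rmult_minus_distr_l, Rabs_mult, (Rabs_pos_eq a Ha).
    pose proof (Rabs_pos (v - v')); nra.
Qed.

Lemma Qb_max F G : in_Qb F -> in_Qb G -> in_Qb (fun p => Rmax (F p) (G p)).
Proof.
  apply (Qb_lift2 Rmax 1); [lra | intros; unfold Rmax; do 2 destruct Rle_dec; lra |].
  intros u u' v v'; pose proof (abs_bounds (u - u')); pose proof (abs_bounds (v - v')).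
  apply abs_le; unfold Rmax; do 2 destruct Rle_dec; lra.
Qed.

Lemma Qb_min F G : in_Qb F -> in_Qb G -> in_Qb (fun p => Rmin (F p) (G p)).
Proof.
  apply (Qb_lift2 Rmin 1); [lra | intros; unfold Rmin; do 2 destruct Rle_dec; lra |].
  intros u u' v v'; pose proof (abs_bounds (u - u')); pose proof (abs_bounds (v - v')).
  apply abs_le; unfold Rmin; do 2 destruct Rle_dec; lra.
Qed.

Lemma Qb_mix al F H : 0 <= al <= 1 -> in_Qb F -> in_Qb H -> in_Qb (mix al F H).
Proof.
  intros Hal HF HH; apply (Qb_plus (fun p => al * F p) (fun p => (1 - al) * H p));
    apply Qb_scal; auto; lra.
Qed.

Create HintDb qb.
#[local] Hint Resolve Qb_cst Qb_step Qb_plus Qb_max Qb_min Qb_scal Qb_mix : qb.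
#[local] Hint Extern 2 (_ <= _) => lra : qb.
#[local] Hint Extern 2 (_ <= _ <= _) => lra : qb.

Definition inD (f : R -> R) : Prop :=
  exists FG : (R -> R) * (R -> R), in_Qb (fst FG) /\ in_Qb (snd FG) /\
    forall x, unit_int x -> f x = fst FG x - snd FG x.

Lemma inD_intro f F G : in_Qb F -> in_Qb G ->
  (forall x, unit_int x -> f x = F x - G x) -> inD f.
Proof. intros; exists (F, G); auto. Qed.

Lemma inD_ext f g : inD f -> (forall x, unit_int x -> f x = g x) -> inD g.
Proof.
  intros [[F G] [HF [HG E]]] Efg; apply (inD_intro _ F G); auto.
  intros x Hx; rewrite <- Efg; auto.
Qed.

Lemma inD_Qb F : in_Qb F -> inD F.
Proof. intros HF; apply (inD_intro _ F (cst 0)); auto with qb; intros; unfold cst; ring. Qed.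

(* Positive and negative parts of a scalar, used to write a * (F - G) as a
   difference of two elements of Q_b. *)
Definition ppart (a : R) : R := Rmax a 0.
Definition npart (a : R) : R := Rmax (- a) 0.

Lemma ppart_ge0 a : 0 <= ppart a.
Proof. apply Rmax_r. Qed.

Lemma npart_ge0 a : 0 <= npart a.
Proof. apply Rmax_r. Qed.

Lemma ppart_npart a : ppart a - npart a = a.
Proof. unfold ppart, npart, Rmax; do 2 destruct Rle_dec; lra. Qed.

Definition comb_pos (a : R) (F G F' : R -> R) : R -> R :=
  fun x => ppart a * F x + npart a * G x + F' x.

Lemma Qb_comb_pos a F G F' : in_Qb F -> in_Qb G -> in_Qb F' -> in_Qb (comb_pos a F G F').
Proof.
  intros; unfold comb_pos; pose proof (ppart_ge0 a); pose proof (npart_ge0 a); auto with qb.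
Qed.

Lemma comb_pos_eq a F G F' G' x :
  a * (F x - G x) + (F' x - G' x) = comb_pos a F G F' x - comb_pos a G F G' x.
Proof. unfold comb_pos; rewrite <- (ppart_npart a) at 1; ring. Qed.

Lemma inD_comb f g a : inD f -> inD g -> inD (fun x => a * f x + g x).
Proof.
  intros [[F G] [HF [HG E]]] [[F' G'] [HF' [HG' E']]]; simpl in *.
  apply (inD_intro _ (comb_pos a F G F') (comb_pos a G F G')); try apply Qb_comb_pos; auto.
  intros x Hx; rewrite E, E'; auto; apply comb_pos_eq.
Qed.

Lemma inD_max f g : inD f -> inD g -> inD (fun x => Rmax (f x) (g x)).
Proof.
  intros [[F G] [HF [HG E]]] [[F' G'] [HF' [HG' E']]]; simpl in *.
  apply (inD_intro _ (fun x => Rmax (F x + G' x) (F' x + G x)) (fun x => G x + G' x));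
    auto with qb.
  intros x Hx; rewrite E, E'; auto; unfold Rmax; do 2 destruct Rle_dec; lra.
Qed.

Lemma inD_min f g : inD f -> inD g -> inD (fun x => Rmin (f x) (g x)).
Proof.
  intros [[F G] [HF [HG E]]] [[F' G'] [HF' [HG' E']]]; simpl in *.
  apply (inD_intro _ (fun x => Rmin (F x + G' x) (F' x + G x)) (fun x => G x + G' x));
    auto with qb.
  intros x Hx; rewrite E, E'; auto; unfold Rmin; do 2 destruct Rle_dec; lra.
Qed.

Ltac indic_cases := unfold indic, Rmax, Rmin, step, cst;
  repeat destruct excluded_middle_informative; repeat destruct Rle_dec;
  repeat destruct Rlt_dec; try lra; try tauto.

Lemma indic_interval a b x : a < b -> indic (fun x => a < x <= b) x = step a x - step b x.
Proof. intros; indic_cases. Qed.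

Lemma indic_full x : unit_int x -> indic unit_int x = cst 1 x.
Proof. intros; indic_cases. Qed.

Lemma indic_compl A x : unit_int x ->
  indic (fun x => unit_int x /\ ~ A x) x = 1 - indic A x.
Proof. intros; indic_cases. Qed.

Lemma indic_union A B x : indic (fun x => A x \/ B x) x = Rmax (indic A x) (indic B x).
Proof. indic_cases. Qed.

Lemma indic_inter A B x : indic (fun x => A x /\ B x) x = Rmin (indic A x) (indic B x).
Proof. indic_cases. Qed.

Lemma indic_ext A B x : (forall x, A x <-> B x) -> indic A x = indic B x.
Proof. intros E; specialize (E x); indic_cases. Qed.

Lemma indic_disjoint_union A B x : ~ (A x /\ B x) ->
  indic (fun x => A x \/ B x) x = indic A x + indic B x.
Proof. indic_cases. Qed.

Lemma indic_between A x : 0 <= indic A x <= 1.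
Proof. indic_cases. Qed.

Lemma inD_indic A : Sigma A -> inD (indic A).
Proof.
  induction 1 as [a b _ Hab _ | | A _ IH | A B _ IHA _ IHB | A B _ IHA _ IHB | A B _ IH E].
  - apply (inD_intro _ (step a) (step b)); auto with qb; intros; apply indic_interval, Hab.
  - apply (inD_ext (cst 1)); [apply inD_Qb; auto with qb|].
    intros; symmetry; apply indic_full; auto.
  - apply (inD_ext (fun x => -1 * indic A x + cst 1 x)).
    + apply inD_comb; auto; apply inD_Qb; auto with qb.
    + intros; rewrite indic_compl; auto; unfold cst; ring.
  - apply (inD_ext _ _ (inD_max _ _ IHA IHB)); intros; symmetry; apply indic_union.
  - apply (inD_ext _ _ (inD_min _ _ IHA IHB)); intros; symmetry; apply indic_inter.
  - apply (inD_ext _ _ IH); intros; apply indic_ext, E.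
Qed.

Section FinitelyAdditiveIntegral.

Variable mu : (R -> Prop) -> R.

Definition DS_bound (Phi : R -> R) (I : R) : Prop :=
  forall d s, d > 0 -> simple_ok s ->
    (forall x, unit_int x -> Rabs (Phi x - simple_val s x) < d) ->
    Rabs (simple_int mu s - I) <= d.

Lemma DS_integral_of_bound Phi I : in_B_Sigma Phi -> DS_bound Phi I -> DS_integral mu Phi I.
Proof.
  intros HB Hbound; split; auto; intros eps He; exists (eps / 2); split; [lra|].
  intros s Hs Hclose; apply Rle_lt_trans with (eps / 2); [apply Hbound; auto; lra | lra].
Qed.

(* If the integral of simple functions is nonexpansive for the sup norm on
   (0,1], it extends to every uniform limit of simple functions. *)
Hypothesis simple_int_nonexpansive : forall s s' d, simple_ok s -> simple_ok s' ->
  (forall x, unit_int x -> Rabs (simple_val s x - simple_val s' x) <= d) ->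
  Rabs (simple_int mu s - simple_int mu s') <= d.

Lemma simple_int_close Phi s s' d d' : simple_ok s -> simple_ok s' ->
  (forall x, unit_int x -> Rabs (Phi x - simple_val s x) < d) ->
  (forall x, unit_int x -> Rabs (Phi x - simple_val s' x) < d') ->
  simple_int mu s' - d' <= simple_int mu s + d.
Proof.
  intros Hs Hs' H H'.
  assert (C := simple_int_nonexpansive s' s (d + d') Hs' Hs).
  apply abs_le in C; [lra|].
  intros x Hx; specialize (H x Hx); specialize (H' x Hx).
  apply abs_lt in H; apply abs_lt in H'; apply abs_le; lra.
Qed.

(* The integral is the supremum of the lower estimates [simple_int s - d]. *)
Lemma DS_bound_exists Phi : in_B_Sigma Phi -> exists I, DS_bound Phi I.
Proof.
  intros HB.
  set (E := fun r => exists s d, simple_ok s /\ d > 0 /\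
             (forall x, unit_int x -> Rabs (Phi x - simple_val s x) < d) /\
             r = simple_int mu s - d).
  destruct (HB 1 ltac:(lra)) as [s0 [Hs0 H0]].
  assert (Hb : bound E).
  { exists (simple_int mu s0 + 1); intros r [s [d [Hs [Hd [H ->]]]]].
    apply (simple_int_close Phi); auto. }
  assert (Hne : exists r, E r) by (exists (simple_int mu s0 - 1), s0, 1; repeat split; auto; lra).
  destruct (completeness E Hb Hne) as [I [Hub Hlub]].
  exists I; intros d s Hd Hs H; apply abs_le; split.
  - assert (I <= simple_int mu s + d); [|lra].
    apply Hlub; intros r [s' [d' [Hs' [Hd' [H' ->]]]]]; apply (simple_int_close Phi); auto.
  - assert (simple_int mu s - d <= I); [|lra].
    apply Hub; exists s, d; repeat split; auto.
Qed.

Definition DS_value (Phi : R -> R) : R :=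
  match excluded_middle_informative (exists I, DS_bound Phi I) with
  | left h => proj1_sig (constructive_indefinite_description _ h)
  | right _ => 0
  end.

Lemma DS_value_spec Phi : in_B_Sigma Phi -> DS_bound Phi (DS_value Phi).
Proof.
  intros HB; unfold DS_value; destruct excluded_middle_informative as [h|h].
  - exact (proj2_sig (constructive_indefinite_description _ h)).
  - exfalso; apply h, DS_bound_exists, HB.
Qed.

End FinitelyAdditiveIntegral.

Lemma DS_integral_zero Phi : in_B_Sigma Phi -> DS_integral (fun _ => 0) Phi 0.
Proof.
  intros HB; apply DS_integral_of_bound; auto; intros d s Hd _ _.
  replace (simple_int (fun _ => 0) s) with 0; [rewrite Rminus_0_r, Rabs_R0; lra|].
  induction s as [|c s IH]; simpl; [reflexivity | rewrite <- IH; ring].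
Qed.

Section Preference.

Variable pref : (R -> R) -> (R -> R) -> Prop.
Hypothesis pref_order : total_preorder pref.
Hypothesis pref_cont : pref_continuous pref.
Hypothesis pref_mono : pref_monotonic pref.
Hypothesis pref_dual : dual_independence pref.

Definition indiff (F G : R -> R) : Prop := pref F G /\ pref G F.

Lemma pref_refl F : in_Qb F -> pref F F.
Proof. exact (proj1 pref_order F). Qed.

Lemma pref_trans F G H : in_Qb F -> in_Qb G -> in_Qb H -> pref F G -> pref G H -> pref F H.
Proof. exact (proj1 (proj2 pref_order) F G H). Qed.

Lemma pref_total F G : in_Qb F -> in_Qb G -> pref F G \/ pref G F.
Proof. exact (proj2 (proj2 pref_order) F G). Qed.

Lemma pref_of_le F G : in_Qb F -> in_Qb G -> (forall p, unit_int p -> G p <= F p) -> pref F G.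
Proof. intros HF HG Hle; apply pref_mono; auto; intros p Hp; specialize (Hle p Hp); lra. Qed.

Lemma pref_cst x y : y <= x -> pref (cst x) (cst y).
Proof. intros; apply pref_of_le; auto with qb; unfold cst; auto. Qed.

Lemma indiff_of_eq F G : in_Qb F -> in_Qb G -> (forall p, unit_int p -> F p = G p) ->
  indiff F G.
Proof.
  intros HF HG E; split; apply pref_of_le; auto; intros p Hp; rewrite (E p Hp); lra.
Qed.

Lemma indiff_sym F G : indiff F G -> indiff G F.
Proof. intros [A B]; split; auto. Qed.

Lemma indiff_trans F G H : in_Qb F -> in_Qb G -> in_Qb H ->
  indiff F G -> indiff G H -> indiff F H.
Proof.
  intros HF HG HH [A B] [C D]; split; [apply (pref_trans F G H) | apply (pref_trans H G F)]; auto.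
Qed.

Lemma strict_indiff F F' G G' : in_Qb F -> in_Qb F' -> in_Qb G -> in_Qb G' ->
  indiff F F' -> indiff G G' -> strict pref F' G' -> strict pref F G.
Proof.
  intros HF HF' HG HG' [A B] [C D] [E N]; split.
  - apply (pref_trans F F' G); auto; apply (pref_trans F' G' G); auto.
  - intro K; apply N; apply (pref_trans G' G F'); auto; apply (pref_trans G F F'); auto.
Qed.

Lemma strict_trans F G H : in_Qb F -> in_Qb G -> in_Qb H ->
  strict pref F G -> strict pref G H -> strict pref F H.
Proof.
  intros HF HG HH [A B] [C D]; split.
  - apply (pref_trans F G H); auto.
  - intro K; apply D; apply (pref_trans H F G); auto.
Qed.

(* If all constants are indifferent, then so is everything in Q_b, since every
   element of Q_b lies between two constants. *)
Lemma pref_all_of_constants : (forall a b, pref (cst b) (cst a)) ->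
  forall F G, in_Qb F -> in_Qb G -> pref F G.
Proof.
  intros Hcst F G HF HG.
  destruct HF as [[MF HMF] HF']; destruct HG as [[MG HMG] HG'].
  assert (HF : in_Qb F) by (split; [exists MF|]; auto).
  assert (HG : in_Qb G) by (split; [exists MG|]; auto).
  apply (pref_trans _ (cst (- MF))); auto with qb.
  - apply pref_of_le; auto with qb; intros p Hp; specialize (HMF p Hp).
    apply abs_le in HMF; unfold cst; lra.
  - apply (pref_trans _ (cst MG)); auto with qb.
    apply pref_of_le; auto with qb; intros p Hp; specialize (HMG p Hp).
    apply abs_le in HMG; unfold cst; lra.
Qed.

(* Dual independence transports a strict preference [cst a > cst b] to any
   pair of constants at distance less than [a - b], by mixing both with a
   suitable constant. *)
Lemma strict_cst_close a b x y : strict pref (cst a) (cst b) ->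
  y < x -> x - y < a - b -> strict pref (cst x) (cst y).
Proof.
  intros Sab Hxy Hd.
  set (al := (x - y) / (a - b)).
  assert (Hal : 0 < al < 1).
  { unfold al; split; [apply Rdiv_lt_0_compat; lra|].
    apply (Rmult_lt_reg_r (a - b)); [lra|]; field_simplify; lra. }
  assert (Hald : al * (a - b) = x - y) by (unfold al; field; lra).
  set (k := (y - al * b) / (1 - al)).
  assert (Hk : (1 - al) * k = y - al * b) by (unfold k; field; lra).
  apply (strict_indiff _ (mix al (cst a) (cst k)) _ (mix al (cst b) (cst k)));
    auto with qb.
  - apply indiff_of_eq; auto with qb; intros; unfold mix, cst; lra.
  - apply indiff_of_eq; auto with qb; intros; unfold mix, cst; lra.
  - exact (pref_dual _ _ _ al (Qb_cst a) (Qb_cst b) (Qb_cst k) Hal Sab).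
Qed.

(* Splitting [y, x] into halves extends the previous lemma to all pairs. *)
Lemma strict_cst_all a b : strict pref (cst a) (cst b) ->
  forall x y, y < x -> strict pref (cst x) (cst y).
Proof.
  intros Sab.
  assert (Hab : b < a).
  { destruct (Rlt_dec b a) as [h|h]; auto.
    exfalso; apply (proj2 Sab), pref_cst; lra. }
  assert (Hhalf : forall n x y, y < x -> x - y < 2 ^ n * (a - b) ->
                    strict pref (cst x) (cst y)).
  { induction n as [|n IH]; intros x y Hxy Hd.
    - apply (strict_cst_close a b); auto; simpl in Hd; lra.
    - simpl in Hd; set (z := (x + y) / 2).
      apply (strict_trans _ (cst z)); auto with qb; apply IH; unfold z; lra. }
  intros x y Hxy.
  destruct (INR_archimed (a - b) (x - y)) as [n Hn]; [lra|].
  apply (Hhalf n); auto.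
  pose proof (poly n 1 Rlt_0_1); replace (1 + 1) with 2 in * by ring.
  assert (INR n * (a - b) <= 2 ^ n * (a - b)) by (apply Rmult_le_compat_r; lra).
  lra.
Qed.

Lemma constants_dichotomy :
  (forall F G, in_Qb F -> in_Qb G -> pref F G) \/
  (forall x y, y < x -> strict pref (cst x) (cst y)).
Proof.
  destruct (classic (forall a b, pref (cst b) (cst a))) as [Hall|Hsome].
  - left; exact (pref_all_of_constants Hall).
  - right; apply not_all_ex_not in Hsome as [a Hsome].
    apply not_all_ex_not in Hsome as [b Hba].
    apply (strict_cst_all a b); split; auto.
    destruct (pref_total (cst a) (cst b)); auto with qb; contradiction.
Qed.


Section CertaintyEquivalent.

Hypothesis cst_strict : forall x y, y < x -> strict pref (cst x) (cst y).

(* Every F in Q_b is indifferent to a constant: the supremum of the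
   constants it weakly dominates (closedness of both contour sets). *)
Lemma ce_exists F : in_Qb F -> exists k, indiff F (cst k).
Proof.
  intros HF; pose proof HF as [[M HM] _].
  set (A := fun k => pref F (cst k)).
  assert (Hb : bound A).
  { exists M; intros k Hk.
    destruct (Rle_dec k M) as [h|h]; auto; exfalso.
    apply (proj2 (cst_strict k M ltac:(lra))).
    apply (pref_trans _ F); auto with qb.
    apply pref_of_le; auto with qb; intros p Hp; specialize (HM p Hp).
    apply abs_le in HM; unfold cst; lra. }
  assert (Hne : exists k, A k).
  { exists (- M); apply pref_of_le; auto with qb; intros p Hp; specialize (HM p Hp).
    apply abs_le in HM; unfold cst; lra. }
  destruct (completeness A Hb Hne) as [s [Hub Hlub]].
  assert (Hconv : forall sgn, -1 <= sgn <= 1 ->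
            unif_conv (fun n => cst (s + sgn * en n)) (cst s)).
  { intros sgn Hsgn; apply unif_conv_en; intros n x _; unfold cst.
    pose proof (en_pos n); apply abs_le; nra. }
  exists s; split.
  - apply (proj2 (pref_cont F _ (cst s) HF (fun n => Qb_cst _) (Qb_cst _)
                   (Hconv (-1) ltac:(lra)))).
    intros n; replace (s + -1 * en n) with (s - en n) by ring; pose proof (en_pos n).
    destruct (classic (exists k, A k /\ s - en n < k)) as [[k [Hk1 Hk2]]|Hn].
    + apply (pref_trans _ (cst k)); auto with qb; apply pref_cst; lra.
    + exfalso; assert (s <= s - en n); [|lra].
      apply Hlub; intros k Hk; destruct (Rle_dec k (s - en n)); auto.
      exfalso; apply Hn; exists k; split; auto; lra.
  - apply (proj1 (pref_cont F _ (cst s) HF (fun n => Qb_cst _) (Qb_cst _)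
                   (Hconv 1 ltac:(lra)))).
    intros n; rewrite Rmult_1_l; pose proof (en_pos n).
    destruct (pref_total (cst (s + en n)) F) as [h|h]; auto with qb.
    exfalso; assert (s + en n <= s); [apply Hub; exact h|lra].
Qed.

Definition ce (F : R -> R) : R :=
  match excluded_middle_informative (exists k, indiff F (cst k)) with
  | left h => proj1_sig (constructive_indefinite_description _ h)
  | right _ => 0
  end.

Lemma ce_spec F : in_Qb F -> indiff F (cst (ce F)).
Proof.
  intros HF; unfold ce; destruct excluded_middle_informative as [h|h].
  - exact (proj2_sig (constructive_indefinite_description _ h)).
  - exfalso; apply h, ce_exists, HF.
Qed.

Lemma ce_unique F k : in_Qb F -> indiff F (cst k) -> ce F = k.
Proof.
  intros HF Hk.
  assert (E : indiff (cst (ce F)) (cst k)).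
  { apply (indiff_trans _ F); auto with qb; apply indiff_sym, ce_spec, HF. }
  destruct E as [A B]; destruct (Rtotal_order (ce F) k) as [h|[h|h]]; auto.
  - destruct (cst_strict k (ce F) h); contradiction.
  - destruct (cst_strict (ce F) k h); contradiction.
Qed.

Lemma ce_cst k : ce (cst k) = k.
Proof. apply ce_unique; auto with qb; split; apply pref_refl; auto with qb. Qed.

Lemma ce_ext F G : in_Qb F -> in_Qb G -> (forall p, unit_int p -> F p = G p) -> ce F = ce G.
Proof.
  intros HF HG E; apply ce_unique; auto.
  apply (indiff_trans _ G); auto with qb; [apply indiff_of_eq | apply ce_spec]; auto.
Qed.

Lemma ce_represents F G : in_Qb F -> in_Qb G -> (strict pref F G <-> ce F > ce G).
Proof.
  intros HF HG; pose proof (ce_spec F HF) as EF; pose proof (ce_spec G HG) as EG.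
  split.
  - intros [_ N]; destruct (Rlt_dec (ce G) (ce F)) as [h|h]; [lra|].
    exfalso; apply N.
    apply (pref_trans _ (cst (ce G))); auto with qb; [apply EG|].
    apply (pref_trans _ (cst (ce F))); auto with qb; [apply pref_cst; lra | apply EF].
  - intros h; apply (strict_indiff _ (cst (ce F)) _ (cst (ce G))); auto with qb.
Qed.

Lemma ce_mono F G : in_Qb F -> in_Qb G -> (forall p, unit_int p -> G p <= F p) -> ce G <= ce F.
Proof.
  intros HF HG Hle; destruct (Rle_dec (ce G) (ce F)) as [h|h]; auto.
  exfalso; apply (proj2 (proj2 (ce_represents G F HG HF) ltac:(lra))).
  apply pref_of_le; auto.
Qed.

(* Replacing F by an indifferent constant inside a mixture preserves
   indifference: constants slightly above/below k are strictly better/worse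
   than F, dual independence keeps this after mixing, and continuity passes to
   the limit. *)
Lemma mix_indiff F H k al : in_Qb F -> in_Qb H -> indiff F (cst k) -> 0 < al < 1 ->
  indiff (mix al F H) (mix al (cst k) H).
Proof.
  intros HF HH Hk Hal.
  assert (Hconv : forall b : nat -> R, (forall n, Rabs (b n) <= en n) ->
            unif_conv (fun n => mix al (cst (k + b n)) H) (mix al (cst k) H)).
  { intros b Hb; apply unif_conv_en; intros n x _; unfold mix, cst.
    specialize (Hb n); apply abs_le in Hb; apply abs_le; nra. }
  assert (QM : forall G, in_Qb G -> in_Qb (mix al G H)) by auto with qb.
  split.
  - apply (proj2 (pref_cont (mix al F H) _ _ (QM F HF) (fun n => QM _ (Qb_cst _))
                   (QM _ (Qb_cst _)) (Hconv (fun n => - en n)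
                      ltac:(intros n; pose proof (en_pos n); apply abs_le; lra)))).
    intros n; pose proof (en_pos n).
    assert (S : strict pref F (cst (k + - en n))).
    { apply (strict_indiff _ (cst k) _ (cst (k + - en n))); auto with qb.
      - split; apply pref_refl; auto with qb.
      - apply cst_strict; lra. }
    exact (proj1 (pref_dual _ _ H al HF (Qb_cst _) HH Hal S)).
  - apply (proj1 (pref_cont (mix al F H) _ _ (QM F HF) (fun n => QM _ (Qb_cst _))
                   (QM _ (Qb_cst _)) (Hconv en
                      ltac:(intros n; pose proof (en_pos n); apply abs_le; lra)))).
    intros n; pose proof (en_pos n).
    assert (S : strict pref (cst (k + en n)) F).
    { apply (strict_indiff _ (cst (k + en n)) _ (cst k)); auto with qb.
      - split; apply pref_refl; auto with qb.
      - apply cst_strict; lra. }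
    exact (proj1 (pref_dual _ _ H al (Qb_cst _) HF HH Hal S)).
Qed.

Lemma ce_mix F G al : in_Qb F -> in_Qb G -> 0 < al < 1 ->
  ce (mix al F G) = al * ce F + (1 - al) * ce G.
Proof.
  intros HF HG Hal.
  set (a := ce F); set (b := ce G).
  assert (EF : indiff F (cst a)) by exact (ce_spec F HF).
  assert (EG : indiff G (cst b)) by exact (ce_spec G HG).
  apply ce_unique; auto with qb.
  apply (indiff_trans _ (mix al (cst a) G)); auto with qb; [apply mix_indiff; auto|].
  apply (indiff_trans _ (mix (1 - al) G (cst a))); auto with qb.
  { apply indiff_of_eq; auto with qb; intros; unfold mix; ring. }
  apply (indiff_trans _ (mix (1 - al) (cst b) (cst a))); auto with qb.
  { apply mix_indiff; auto with qb; lra. }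
  apply indiff_of_eq; auto with qb; intros; unfold mix, cst; ring.
Qed.

(* Positive homogeneity and additivity follow from the mixture rule, using
   mixtures with the constant 0. *)
Lemma ce_scal F a : in_Qb F -> 0 <= a -> ce (fun p => a * F p) = a * ce F.
Proof.
  intros HF Ha.
  destruct (Rtotal_order a 1) as [h|[h|h]].
  - destruct (Req_dec a 0) as [z|z].
    + subst a; rewrite (ce_ext _ (cst 0)); auto with qb.
      * rewrite ce_cst; ring.
      * intros; unfold cst; ring.
    + rewrite (ce_ext _ (mix a F (cst 0))); auto with qb.
      * rewrite ce_mix, ce_cst; auto with qb; [ring | lra].
      * intros; unfold mix, cst; ring.
  - subst a; rewrite Rmult_1_l; apply ce_ext; auto with qb; intros; ring.
  - assert (Hinv : 0 < / a < 1).
    { split; [apply Rinv_0_lt_compat; lra|].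
      rewrite <- Rinv_1; apply Rinv_lt_contravar; lra. }
    assert (E : ce F = ce (mix (/ a) (fun p => a * F p) (cst 0))).
    { apply ce_ext; auto with qb; intros; unfold mix, cst; field; lra. }
    rewrite E, ce_mix, ce_cst; auto with qb; field; lra.
Qed.

Lemma ce_plus F G : in_Qb F -> in_Qb G -> ce (fun p => F p + G p) = ce F + ce G.
Proof.
  intros HF HG.
  rewrite (ce_ext _ (fun p => 2 * mix (1/2) F G p)); auto with qb.
  - rewrite ce_scal, ce_mix; auto with qb; lra.
  - intros; unfold mix; field.
Qed.

Definition Lf (f : R -> R) : R :=
  match excluded_middle_informative (inD f) with
  | left h => let FG := proj1_sig (constructive_indefinite_description _ h) in
              ce (fst FG) - ce (snd FG)
  | right _ => 0
  end.

(* L is well defined: by additivity of ce, it does not depend on the chosen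
   decomposition f = F - G. *)
Lemma Lf_spec f F G : in_Qb F -> in_Qb G ->
  (forall x, unit_int x -> f x = F x - G x) -> Lf f = ce F - ce G.
Proof.
  intros HF HG E; unfold Lf; destruct excluded_middle_informative as [h|h].
  - destruct (constructive_indefinite_description _ h) as [[F' G'] [HF' [HG' E']]]; simpl in *.
    assert (Hsum : ce (fun p => F p + G' p) = ce (fun p => F' p + G p)).
    { apply ce_ext; auto with qb; intros x Hx; specialize (E x Hx); specialize (E' x Hx); lra. }
    rewrite !ce_plus in Hsum; auto; lra.
  - exfalso; apply h; exists (F, G); auto.
Qed.

Lemma Lf_Qb F : in_Qb F -> Lf F = ce F.
Proof.
  intros HF; rewrite (Lf_spec F F (cst 0)), ce_cst; auto with qb; [ring|].
  intros; unfold cst; ring.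
Qed.

Lemma Lf_cst k : Lf (cst k) = k.
Proof. rewrite Lf_Qb, ce_cst; auto with qb. Qed.

Lemma Lf_ext f g : (forall x, unit_int x -> f x = g x) -> Lf f = Lf g.
Proof.
  intros E; destruct (classic (inD f)) as [[[F G] [HF [HG Ef]]]|Hf]; simpl in *.
  - rewrite (Lf_spec f F G), (Lf_spec g F G); auto; intros x Hx; rewrite <- E; auto.
  - assert (Hg : ~ inD g).
    { intros Hg; apply Hf, (inD_ext g); auto; intros x Hx; rewrite E; auto. }
    unfold Lf; do 2 (destruct excluded_middle_informative; [contradiction|]); reflexivity.
Qed.

Lemma Lf_comb f g a : inD f -> inD g -> Lf (fun x => a * f x + g x) = a * Lf f + Lf g.
Proof.
  intros [[F G] [HF [HG E]]] [[F' G'] [HF' [HG' E']]]; simpl in *.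
  rewrite (Lf_spec f F G), (Lf_spec g F' G'),
    (Lf_spec _ (comb_pos a F G F') (comb_pos a G F G')); try apply Qb_comb_pos; auto.
  - unfold comb_pos; pose proof (ppart_ge0 a); pose proof (npart_ge0 a).
    rewrite !ce_plus, !ce_scal; auto with qb.
    pose proof (ppart_npart a) as Ha; set (p := ppart a) in *; set (n := npart a) in *.
    rewrite <- Ha; ring.
  - intros x Hx; rewrite E, E'; auto; apply comb_pos_eq.
Qed.

Lemma Lf_mono f g : inD f -> inD g -> (forall x, unit_int x -> f x <= g x) -> Lf f <= Lf g.
Proof.
  intros [[F G] [HF [HG E]]] [[F' G'] [HF' [HG' E']]] Hle; simpl in *.
  rewrite (Lf_spec f F G), (Lf_spec g F' G'); auto.
  assert (ce (fun p => F p + G' p) <= ce (fun p => F' p + G p)).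
  { apply ce_mono; auto with qb; intros x Hx; specialize (Hle x Hx).
    rewrite E, E' in Hle; auto; lra. }
  rewrite !ce_plus in H; auto; lra.
Qed.

Lemma Lf_close f g d : inD f -> inD g ->
  (forall x, unit_int x -> Rabs (f x - g x) <= d) -> Rabs (Lf f - Lf g) <= d.
Proof.
  intros Hf Hg Hclose.
  assert (Hshift : forall h, inD h -> Lf (fun x => 1 * h x + cst d x) = Lf h + d).
  { intros h Hh; rewrite Lf_comb, Lf_cst; [ring | auto | apply inD_Qb; auto with qb]. }
  assert (Lf f <= Lf g + d).
  { rewrite <- (Hshift g Hg); apply Lf_mono; auto.
    - apply inD_comb; auto; apply inD_Qb; auto with qb.
    - intros x Hx; specialize (Hclose x Hx); apply abs_le in Hclose; unfold cst; lra. }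
  assert (Lf g <= Lf f + d).
  { rewrite <- (Hshift f Hf); apply Lf_mono; auto.
    - apply inD_comb; auto; apply inD_Qb; auto with qb.
    - intros x Hx; specialize (Hclose x Hx); apply abs_le in Hclose; unfold cst; lra. }
  apply abs_le; lra.
Qed.

Definition mu (A : R -> Prop) : R := Lf (indic A).

Lemma mu_fa : fa_measure mu.
Proof.
  intros A B HA HB Hdisj; unfold mu.
  rewrite (Lf_ext _ (fun x => 1 * indic A x + indic B x)), Lf_comb; try apply inD_indic; auto.
  - ring.
  - intros x _; rewrite indic_disjoint_union; auto; ring.
Qed.

Lemma mu_between A : Sigma A -> 0 <= mu A <= 1.
Proof.
  intros HA; unfold mu; rewrite <- (Lf_cst 0), <- (Lf_cst 1).
  split; apply Lf_mono; try apply inD_indic; try apply inD_Qb; auto with qb;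
    intros x _; unfold cst; pose proof (indic_between A x); lra.
Qed.

Lemma mu_nonneg : nonneg_measure mu.
Proof. intros A HA; apply mu_between, HA. Qed.

Lemma mu_bounded : bounded_measure mu.
Proof. exists 1; intros A HA; apply abs_le; pose proof (mu_between A HA); lra. Qed.

Lemma Lf_simple s : simple_ok s -> inD (simple_val s) /\ Lf (simple_val s) = simple_int mu s.
Proof.
  induction s as [|c s IH]; intros Hs.
  - split; [apply (inD_ext (cst 0)); [apply inD_Qb; auto with qb | reflexivity]|].
    rewrite (Lf_ext _ (cst 0)); [apply Lf_cst | reflexivity].
  - assert (Hc : Sigma (snd c)) by (apply Hs; left; auto).
    destruct IH as [Hin Hval]; [intros c' Hc'; apply Hs; right; auto|].
    split; [exact (inD_comb _ _ (fst c) (inD_indic _ Hc) Hin)|].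
    simpl; rewrite <- Hval; exact (Lf_comb _ _ (fst c) (inD_indic _ Hc) Hin).
Qed.

Lemma simple_int_mu_nonexpansive s s' d : simple_ok s -> simple_ok s' ->
  (forall x, unit_int x -> Rabs (simple_val s x - simple_val s' x) <= d) ->
  Rabs (simple_int mu s - simple_int mu s') <= d.
Proof.
  intros Hs Hs' Hclose.
  destruct (Lf_simple s Hs) as [I1 <-]; destruct (Lf_simple s' Hs') as [I2 <-].
  apply Lf_close; auto.
Qed.

Lemma Lf_DS_bound f : inD f -> DS_bound mu f (Lf f).
Proof.
  intros Hf d s Hd Hs Hclose.
  destruct (Lf_simple s Hs) as [I <-]; rewrite Rabs_minus_sym.
  apply Lf_close; auto; intros x Hx; specialize (Hclose x Hx); lra.
Qed.

Definition U (Phi : R -> R) : R :=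
  if excluded_middle_informative (inD Phi) then Lf Phi else DS_value mu Phi.

Lemma U_DS Phi : in_B_Sigma Phi -> DS_integral mu Phi (U Phi).
Proof.
  intros HB; apply DS_integral_of_bound; auto; unfold U.
  destruct excluded_middle_informative as [h|h].
  - apply Lf_DS_bound, h.
  - apply DS_value_spec; auto; exact simple_int_mu_nonexpansive.
Qed.

Lemma U_Qb Phi : in_Qb Phi -> U Phi = ce Phi.
Proof.
  intros HQ; unfold U; destruct excluded_middle_informative as [h|h].
  - apply Lf_Qb, HQ.
  - exfalso; apply h, inD_Qb, HQ.
Qed.

End CertaintyEquivalent.

End Preference.

Theorem mainTheorem10 (pref : (R -> R) -> (R -> R) -> Prop) :
  total_preorder pref -> pref_continuous pref -> pref_monotonic pref ->
  dual_independence pref ->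
  exists mu : (R -> Prop) -> R,
    fa_measure mu /\ nonneg_measure mu /\ bounded_measure mu /\
    exists U : (R -> R) -> R,
      (forall Phi, in_B_Sigma Phi -> DS_integral mu Phi (U Phi)) /\
      (forall Phi Psi, in_Qb Phi -> in_Qb Psi ->
         (strict pref Phi Psi <-> U Phi > U Psi)).
Proof.
  intros Horder Hcont Hmono Hdual.
  destruct (constants_dichotomy pref Horder Hmono Hdual) as [Htrivial|Hcst].
  -
    exists (fun _ => 0); split; [|split; [|split]].
    + intros A B _ _ _; ring.
    + intros A _; lra.
    + exists 0; intros; rewrite Rabs_R0; lra.
    + exists (fun _ => 0); split; [exact DS_integral_zero|].
      intros Phi Psi HPhi HPsi; split; [|lra].
      intros [_ N]; exfalso; apply N, Htrivial; auto.
  -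
    exists (mu pref); split; [|split; [|split]].
    + apply mu_fa; auto.
    + apply mu_nonneg; auto.
    + apply mu_bounded; auto.
    + exists (U pref); split; [intros; apply U_DS; auto|].
      intros Phi Psi HPhi HPsi; rewrite !U_Qb; auto; apply ce_represents; auto.
Qed.
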